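(* Let $\mathcal{D}$ be a category. For every pseudo-functorial factorization in $\mathcal{D}$ there exists a functorial factorization in $\mathcal{D}$ naturally isomorphic to it (as functors $\mathcal{D}^{\Delta^1}\to\mathcal{D}^{\Delta^2}$).
   Context: $\Delta^n$ is the linear poset $\{0,\dots,n\}$ viewed as a category with a unique morphism $i\to j$ for $i\le j$. The composition functor $\circ:\mathcal{D}^{\Delta^2}\to\mathcal{D}^{\Delta^1}$ is restriction along $\Delta^1\cong\Delta^{\{0,2\}}\hookrightarrow\Delta^2$. A functorial factorization in $\mathcal{D}$ is a functor $s:\mathcal{D}^{\Delta^1}\to\mathcal{D}^{\Delta^2}$ with $\circ\, s=\mathrm{id}$ (a strict section). A pseudo-functorial factorization is a functor $s:\mathcal{D}^{\Delta^1}\to\mathcal{D}^{\Delta^2}$ together with a natural isomorphism $\circ\, s\cong\mathrm{id}_{\mathcal{D}^{\Delta^1}}$. *)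

From mathcomp Require Import all_boot.
From Stdlib Require Import ProofIrrelevance FunctionalExtensionality.

Set Universe Polymorphism.
Set Implicit Arguments.
Unset Strict Implicit.
Unset Printing Implicit Defensive.

Record Category := {
  ob : Type;
  hom : ob -> ob -> Type;
  idm : forall a, hom a a;
  comp : forall a b c, hom b c -> hom a b -> hom a c;
  comp_idl : forall a b (f : hom a b), comp (idm b) f = f;
  comp_idr : forall a b (f : hom a b), comp f (idm a) = f;
  comp_assoc : forall a b c d (h : hom c d) (g : hom b c) (f : hom a b),
      comp h (comp g f) = comp (comp h g) f
}.
Arguments hom : clear implicits.
Arguments idm {C} a : rename.
Arguments comp {C a b c} _ _ : rename.

Record Functor (C D : Category) := {
  fobj : ob C -> ob D;
  fmap : forall a b, hom C a b -> hom D (fobj a) (fobj b);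
  fmap_id : forall a, fmap (idm a) = idm (fobj a);
  fmap_comp : forall a b c (g : hom C b c) (f : hom C a b),
      fmap (comp g f) = comp (fmap g) (fmap f)
}.
Arguments fobj {C D} F a : rename.
Arguments fmap {C D} F {a b} f : rename.

Record NatTrans (C D : Category) (F G : Functor C D) := {
  comp_at : forall a, hom D (fobj F a) (fobj G a);
  naturality : forall a b (f : hom C a b),
      comp (fmap G f) (comp_at a) = comp (comp_at b) (fmap F f)
}.
Arguments comp_at {C D F G} n a : rename.

Lemma nat_trans_ext (C D : Category) (F G : Functor C D) (n m : NatTrans F G) :
  (forall a, comp_at n a = comp_at m a) -> n = m.
Proof.
case: n => n Hn; case: m => m Hm /= E.
have E' : n = m by apply: functional_extensionality_dep.
subst m; f_equal; apply: proof_irrelevance.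
Qed.

Section FunCat.
Variables C D : Category.

Definition nt_id (F : Functor C D) : NatTrans F F.
Proof.
refine {| comp_at := fun a => idm (fobj F a) |}.
by move=> a b f; rewrite comp_idl comp_idr.
Defined.

Definition nt_comp (F G H : Functor C D) (m : NatTrans G H) (n : NatTrans F G) :
  NatTrans F H.
Proof.
refine {| comp_at := fun a => comp (comp_at m a) (comp_at n a) |}.
move=> a b f.
by rewrite comp_assoc naturality -comp_assoc naturality comp_assoc.
Defined.

Definition FunCat : Category.
Proof.
refine {| ob := Functor C D; hom := @NatTrans C D;
          idm := nt_id; comp := nt_comp |}.
- by move=> F G n; apply: nat_trans_ext => a /=; rewrite comp_idl.
- by move=> F G n; apply: nat_trans_ext => a /=; rewrite comp_idr.
- by move=> F G H K p m n; apply: nat_trans_ext => a /=; rewrite comp_assoc.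
Defined.
End FunCat.

Definition Fid (C : Category) : Functor C C.
Proof.
refine {| fobj := fun a => a; fmap := fun a b f => f |}; by [].
Defined.

Definition Fcomp (A B C : Category) (G : Functor B C) (F : Functor A B) :
  Functor A C.
Proof.
refine {| fobj := fun a => fobj G (fobj F a);
          fmap := fun a b f => fmap G (fmap F f) |}.
- by move=> a; rewrite !fmap_id.
- by move=> a b c g f; rewrite !fmap_comp.
Defined.

Definition is_iso (C : Category) (a b : ob C) (f : hom C a b) : Prop :=
  exists g : hom C b a, comp g f = idm a /\ comp f g = idm b.

Definition nat_iso (C D : Category) (F G : Functor C D) : Prop :=
  exists n : hom (FunCat C D) F G, is_iso n.

(* The linear poset Delta^n = {0,...,n} as a category:
   a unique morphism i -> j iff i <= j. *)
Definition Delta (n : nat) : Category.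
Proof.
refine {| ob := 'I_n.+1; hom := fun i j => is_true (i <= j)%N;
          idm := fun i => leqnn i;
          comp := fun i j k (g : (j <= k)%N) (f : (i <= j)%N) => leq_trans f g |}.
all: by move=> *; apply: bool_irrelevance.
Defined.

(* The inclusion Delta^1 = Delta^{0,2} into Delta^2 : 0 |-> 0, 1 |-> 2. *)
Definition d02_obj (i : 'I_2) : 'I_3 := inord (i.*2).

Lemma d02_val (i : 'I_2) : nat_of_ord (d02_obj i) = i.*2.
Proof. by rewrite /d02_obj inordK //; case: i => [[|[|]]]. Qed.

Lemma d02_mono (i j : 'I_2) : (i <= j)%N -> (d02_obj i <= d02_obj j)%N.
Proof. by rewrite !d02_val leq_double. Qed.

Definition d02 : Functor (Delta 1) (Delta 2).
Proof.
refine {| fobj := d02_obj : ob (Delta 1) -> ob (Delta 2) ;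
          fmap := fun (i j : 'I_2) (f : (i <= j)%N) => d02_mono f |}.
- by move=> *; apply: bool_irrelevance.
- by move=> *; apply: bool_irrelevance.
Defined.

Definition precomp (C C' D : Category) (G : Functor C C') :
  Functor (FunCat C' D) (FunCat C D).
Proof.
unshelve refine {| fobj := fun F : ob (FunCat C' D) =>
                          (Fcomp F G : ob (FunCat C D)) |}.
- move=> F F' n /=.
  refine (@Build_NatTrans C D (Fcomp F G) (Fcomp F' G)
            (fun a => comp_at n (fobj G a)) _).
  by move=> a b f /=; rewrite naturality.
- by move=> F; apply: nat_trans_ext.
- by move=> F F' F'' m n; apply: nat_trans_ext.
Defined.

Definition compose_functor (D : Category) :
  Functor (FunCat (Delta 2) D) (FunCat (Delta 1) D) := precomp D d02.

Definition functorial_factorization (D : Category)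
    (s : Functor (FunCat (Delta 1) D) (FunCat (Delta 2) D)) : Prop :=
  Fcomp (compose_functor D) s = Fid (FunCat (Delta 1) D).

Definition pseudo_functorial_factorization (D : Category)
    (s : Functor (FunCat (Delta 1) D) (FunCat (Delta 2) D)) : Prop :=
  nat_iso (Fcomp (compose_functor D) s) (Fid (FunCat (Delta 1) D)).

(* Conjugate each factorization s(X) by the components of the isomorphism
   o s ≅ id, so that its objects at 0 and 2 become literally X 0 and X 1 while
   the middle object is kept.  The conjugated factorization restricts to X on
   the nose, and since it is objectwise isomorphic to s(X), naturally in X,
   transporting s along these isomorphisms gives a strict section s' ≅ s. *)
From Stdlib Require Import ProofIrrelevance FunctionalExtensionality.
From mathcomp Require Import ssreflect ssrfun ssrbool eqtype ssrnat fintype.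
(* Imported last so that [comp] is categorical composition, not ssrfun's. *)

Set Universe Polymorphism.
Set Implicit Arguments.
Unset Strict Implicit.
Unset Printing Implicit Defensive.

Definition hom_of_eq (C : Category) (a b : ob C) (e : a = b) : hom C a b :=
  match e in _ = y return hom C a y with erefl => idm a end.

Lemma functor_ext (C D : Category) (F G : Functor C D)
    (eobj : forall a, fobj F a = fobj G a) :
  (forall a b (f : hom C a b),
     comp (hom_of_eq (eobj b)) (comp (fmap F f) (hom_of_eq (esym (eobj a))))
     = fmap G f) ->
  F = G.
Proof.
case: F eobj => fo fm fi fc; case: G => go gm gi gc /= eobj emap.
have eo : fo = go := functional_extensionality _ _ eobj.
subst go.
have eobj_refl a : eobj a = erefl by apply: proof_irrelevance.
have em : fm = gm.
  apply: functional_extensionality_dep => a.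
  apply: functional_extensionality_dep => b.
  apply: functional_extensionality => f.
  by rewrite -emap !eobj_refl /= comp_idl comp_idr.
subst gm; f_equal; apply: proof_irrelevance.
Qed.

Lemma comp_at_hom_of_eq (C D : Category) (F G : Functor C D) (e : F = G) a :
  comp_at (@hom_of_eq (FunCat C D) F G e) a
  = hom_of_eq (f_equal (fun H => fobj H a) e).
Proof. by case: G / e. Qed.

Lemma nt_comp_at_id (C D : Category) (F G : Functor C D)
    (m : NatTrans G F) (n : NatTrans F G) :
  nt_comp m n = nt_id F -> forall a, comp (comp_at m a) (comp_at n a) = idm _.
Proof. by move=> mn a; have := f_equal (fun k => comp_at k a) mn. Qed.

Section Transport.
Variables (C D : Category) (G : Functor C D) (O : ob C -> ob D).
Variables (phi : forall a, hom D (fobj G a) (O a))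
          (psi : forall a, hom D (O a) (fobj G a)).
Hypotheses (psi_phi : forall a, comp (psi a) (phi a) = idm _)
           (phi_psi : forall a, comp (phi a) (psi a) = idm _).

Definition transport : Functor C D.
Proof.
refine {| fobj := O;
          fmap := fun a b f => comp (phi b) (comp (fmap G f) (psi a)) |}.
- by move=> a; rewrite fmap_id comp_idl phi_psi.
- move=> a b c g f; rewrite fmap_comp -!comp_assoc; congr comp; congr comp.
  by rewrite comp_assoc psi_phi comp_idl.
Defined.

Definition transport_to : NatTrans transport G.
Proof.
refine (@Build_NatTrans C D transport G psi _).
by move=> a b f /=; rewrite !comp_assoc psi_phi comp_idl.
Defined.

Definition transport_from : NatTrans G transport.
Proof.
refine (@Build_NatTrans C D G transport phi _).
by move=> a b f /=; rewrite -!comp_assoc psi_phi comp_idr.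
Defined.

Lemma transport_nat_iso : nat_iso transport G.
Proof.
exists transport_to, transport_from; split.
- by apply: nat_trans_ext => a /=; rewrite phi_psi.
- by apply: nat_trans_ext => a /=; rewrite psi_phi.
Qed.
End Transport.

Lemma fmap_Delta_irr (n : nat) (D : Category) (F : Functor (Delta n) D)
    (i j : ob (Delta n)) (l l' : hom (Delta n) i j) : fmap F l = fmap F l'.
Proof. by rewrite (bool_irrelevance l l'). Qed.

Lemma fmap_Delta_id (n : nat) (D : Category) (F : Functor (Delta n) D)
    (i : ob (Delta n)) (l : hom (Delta n) i i) : fmap F l = idm _.
Proof. by rewrite -(fmap_id F i); apply: fmap_Delta_irr. Qed.

Section Strictify.
Variables (D : Category) (s : Functor (FunCat (Delta 1) D) (FunCat (Delta 2) D)).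
Variables (al : NatTrans (Fcomp (compose_functor D) s) (Fid (FunCat (Delta 1) D)))
          (be : NatTrans (Fid (FunCat (Delta 1) D)) (Fcomp (compose_functor D) s)).
Hypotheses (be_al : nt_comp be al = nt_id _) (al_be : nt_comp al be = nt_id _).

Section Factorization.
Variable X : Functor (Delta 1) D.
Let sX : Functor (Delta 2) D := fobj s X.
Let a (i : 'I_2) : hom D (fobj sX (d02_obj i)) (fobj X i) :=
  comp_at (comp_at al X) i.
Let b (i : 'I_2) : hom D (fobj X i) (fobj sX (d02_obj i)) :=
  comp_at (comp_at be X) i.

Lemma be_al_at i : comp (b i) (a i) = idm _.
Proof. exact: nt_comp_at_id (nt_comp_at_id be_al X) i. Qed.

Lemma al_be_at i : comp (a i) (b i) = idm _.
Proof. exact: nt_comp_at_id (nt_comp_at_id al_be X) i. Qed.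

Definition strict_obj (j : 'I_3) : ob D :=
  match nat_of_ord j with
  | 0 => fobj X (ord0 : 'I_2)
  | 1 => fobj sX j
  | _ => fobj X (ord_max : 'I_2)
  end.

(* At an endpoint j, [d02_obj i] equals j only propositionally, so we pass
   through the identity-like morphism [fmap sX] between them. *)
Definition to_strict (j : 'I_3) : hom D (fobj sX j) (strict_obj j).
Proof.
case: j => [[|[|m]] lt_j]; rewrite /strict_obj /=.
- exact: comp (a ord0) (@fmap _ _ sX (Ordinal lt_j) (d02_obj ord0) (leq0n _)).
- exact: idm _.
- refine (comp (a ord_max) (@fmap _ _ sX (Ordinal lt_j) (d02_obj ord_max) _)).
  by change (m.+2 <= d02_obj (ord_max : 'I_2)); rewrite d02_val.
Defined.

Definition of_strict (j : 'I_3) : hom D (strict_obj j) (fobj sX j).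
Proof.
case: j => [[|[|m]] lt_j]; rewrite /strict_obj /=.
- refine (comp (@fmap _ _ sX (d02_obj ord0) (Ordinal lt_j) _) (b ord0)).
  by change (d02_obj (ord0 : 'I_2) <= 0); rewrite d02_val.
- exact: idm _.
- refine (comp (@fmap _ _ sX (d02_obj ord_max) (Ordinal lt_j) _) (b ord_max)).
  by change (d02_obj (ord_max : 'I_2) <= m.+2); rewrite d02_val.
Defined.

Lemma of_to_strict j : comp (of_strict j) (to_strict j) = idm _.
Proof.
case: j => [[|[|m]] lt_j]; rewrite /of_strict /to_strict /= ?comp_idl //;
by rewrite -!comp_assoc (comp_assoc (b _)) be_al_at comp_idl -fmap_comp
  fmap_Delta_id.
Qed.

Lemma to_of_strict j : comp (to_strict j) (of_strict j) = idm _.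
Proof.
case: j => [[|[|m]] lt_j]; rewrite /of_strict /to_strict /= ?comp_idl //;
by rewrite -!comp_assoc (comp_assoc (fmap _ _)) -fmap_comp fmap_Delta_id
  comp_idl al_be_at.
Qed.

Lemma strict_obj_d02 (i : 'I_2) : strict_obj (d02_obj i) = fobj X i.
Proof.
rewrite /strict_obj d02_val.
by case: i => [[|[|k]] lt_i] //=; congr (fobj X _); apply: val_inj.
Qed.

Lemma to_strict_endpoint (i : 'I_2) (j : 'I_3) :
  nat_of_ord j = i.*2 -> forall (e : strict_obj j = fobj X i) l,
  comp (hom_of_eq e) (to_strict j) = comp (a i) (@fmap _ _ sX j (d02_obj i) l).
Proof.
case: i => [[|[|k]] lt_i] //; case: j => [[|[|[|m]]] lt_j] //= _ e l;
  [rewrite (bool_irrelevance lt_i (ltn0Sn 1)) in e l *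
  |rewrite (bool_irrelevance lt_i (ltnSn 1)) in e l *];
  rewrite (proof_irrelevance _ e erefl) /= comp_idl;
  by congr comp; apply: fmap_Delta_irr.
Qed.

Lemma of_strict_endpoint (i : 'I_2) (j : 'I_3) :
  nat_of_ord j = i.*2 -> forall (e : fobj X i = strict_obj j) l,
  comp (of_strict j) (hom_of_eq e)
  = comp (@fmap _ _ sX (d02_obj i) j l) (b i).
Proof.
case: i => [[|[|k]] lt_i] //; case: j => [[|[|[|m]]] lt_j] //= _ e l;
  [rewrite (bool_irrelevance lt_i (ltn0Sn 1)) in e l *
  |rewrite (bool_irrelevance lt_i (ltnSn 1)) in e l *];
  rewrite (proof_irrelevance _ e erefl) /= comp_idr;
  by congr comp; apply: fmap_Delta_irr.
Qed.

Lemma to_strict_d02 (i : 'I_2) (e : strict_obj (d02_obj i) = fobj X i) :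
  comp (hom_of_eq e) (to_strict (d02_obj i)) = a i.
Proof.
by rewrite (to_strict_endpoint (d02_val i) e (idm (C:=Delta 2) _)) fmap_id
  comp_idr.
Qed.

Lemma of_strict_d02 (i : 'I_2) (e : fobj X i = strict_obj (d02_obj i)) :
  comp (of_strict (d02_obj i)) (hom_of_eq e) = b i.
Proof.
by rewrite (of_strict_endpoint (d02_val i) e (idm (C:=Delta 2) _)) fmap_id
  comp_idl.
Qed.

Definition strict_factorization : Functor (Delta 2) D :=
  @transport (Delta 2) D sX strict_obj to_strict of_strict
    of_to_strict to_of_strict.

Lemma strict_factorization_d02 : Fcomp strict_factorization d02 = X.
Proof.
refine (@functor_ext _ _ (Fcomp strict_factorization d02) X strict_obj_d02 _)
  => i i' f /=.
rewrite !comp_assoc to_strict_d02 -!comp_assoc of_strict_d02.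
have /= al_nat := naturality (comp_at al X) f.
by rewrite comp_assoc -al_nat -comp_assoc al_be_at comp_idr.
Qed.
End Factorization.

Definition to_strict_factorization (X : ob (FunCat (Delta 1) D)) :
  hom (FunCat (Delta 2) D) (fobj s X) (strict_factorization X) :=
  @transport_from (Delta 2) D (fobj s X) _ _ _ (of_to_strict X) (to_of_strict X).

Definition of_strict_factorization (X : ob (FunCat (Delta 1) D)) :
  hom (FunCat (Delta 2) D) (strict_factorization X) (fobj s X) :=
  @transport_to (Delta 2) D (fobj s X) _ _ _ (of_to_strict X) (to_of_strict X).

Lemma of_to_strict_factorization X :
  comp (of_strict_factorization X) (to_strict_factorization X) = idm _.
Proof. by apply: nat_trans_ext => j /=; rewrite of_to_strict. Qed.

Lemma to_of_strict_factorization X :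
  comp (to_strict_factorization X) (of_strict_factorization X) = idm _.
Proof. by apply: nat_trans_ext => j /=; rewrite to_of_strict. Qed.

Definition strictify : Functor (FunCat (Delta 1) D) (FunCat (Delta 2) D) :=
  @transport _ _ s (fun X => strict_factorization X : ob (FunCat (Delta 2) D))
    to_strict_factorization of_strict_factorization
    of_to_strict_factorization to_of_strict_factorization.

Lemma strictify_functorial : functorial_factorization strictify.
Proof.
refine (@functor_ext _ _ (Fcomp (compose_functor D) strictify) (Fid _)
          strict_factorization_d02 _) => X Y n.
apply: nat_trans_ext => i /=; rewrite !comp_at_hom_of_eq.
rewrite !comp_assoc to_strict_d02 -!comp_assoc of_strict_d02.
have /= al_nat := f_equal (fun m => comp_at m i) (naturality al n).
by rewrite comp_assoc -al_nat -comp_assoc al_be_at comp_idr.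
Qed.

Lemma strictify_nat_iso : nat_iso strictify s.
Proof. exact: transport_nat_iso. Qed.
End Strictify.

Theorem lemma5p5 (D : Category)
    (s : Functor (FunCat (Delta 1) D) (FunCat (Delta 2) D)) :
  pseudo_functorial_factorization s ->
  exists s' : Functor (FunCat (Delta 1) D) (FunCat (Delta 2) D),
    functorial_factorization s' /\ nat_iso s' s.
Proof.
case=> al [be [be_al al_be]].
exists (strictify be_al al_be).
split; [exact: strictify_functorial | exact: strictify_nat_iso].
Qed.
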